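(* Let $0<s\le1$, let $\Delta_s\subset\mathbb C$ be the closed disk of radius $s$ and $\Delta_s^*=\Delta_s\setminus\{0\}$. Let $g$ be a smooth real-valued function on an open neighbourhood of $\Delta_s^*$, and put $\omega=\frac{i}{\pi}\partial\bar\partial g$, $\eta=\frac{i}{\pi}\bar\partial g$. Suppose $\omega$ is semipositive and that there exist $a\in\mathbb R$ and a subpolynomial function $\mu$ with $-\log\mu(1/|z|)\le g(z)+a\log|z|\le\log\mu(1/|z|)$ on $\Delta_s^*$. Then $\int_{\Delta_s}\omega:=\lim_{\varepsilon\to0}\int_{\Delta_s\setminus\Delta_\varepsilon}\omega$ exists in $\mathbb R$, $\lim_{t\to0}\int_{\partial\Delta_t}\eta=-a$, and $$0\le\int_{\Delta_s}\omega=\int_{\partial\Delta_s}\eta+a.$$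
   Context: A function $\mu\colon\mathbb R_{>0}\to\mathbb R_{>0}$ is subpolynomial if $\lim_{x\to\infty}\mu(x)/x^n=0$ for every $n>0$. A $(1,1)$-form $\omega$ is semipositive if $\int_{\Delta_t}\psi^*\omega\ge0$ for every continuous map $\psi$ from a closed disk $\Delta_t$ into the domain that is holomorphic on the interior. Boundary circles are positively oriented. *)

(* classical real analysis. The complex plane is modelled as R x R
   (z = x + i y); functions on (subsets of) C are functions R -> R -> R. *)
From Stdlib Require Import Reals ClassicalEpsilon.
Open Scope R_scope.

(* Riemann integral of f over [a,b] if f is Riemann integrable there, 0 otherwise. *)
Definition RInt (f : R -> R) (a b : R) : R :=
  match excluded_middle_informative (inhabited (Riemann_integrable f a b)) with
  | left _ => epsilon (inhabits 0)
                (fun I => exists pr : Riemann_integrable f a b, RiemannInt pr = I)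
  | right _ => 0
  end.

(* derivative of f at x (meaningful when f is differentiable at x) *)
Definition deriv1 (f : R -> R) (x : R) : R :=
  epsilon (inhabits 0) (fun l => derivable_pt_lim f x l).

Definition dist2 (x y x' y' : R) : R := sqrt ((x - x') ^ 2 + (y - y') ^ 2).

Definition open2 (U : R -> R -> Prop) : Prop :=
  forall x y, U x y -> exists d, 0 < d /\ forall x' y', dist2 x' y' x y < d -> U x' y'.

Definition cont_on2 (U : R -> R -> Prop) (f : R -> R -> R) : Prop :=
  forall x y, U x y -> forall e, 0 < e -> exists d, 0 < d /\
    forall x' y', dist2 x' y' x y < d -> Rabs (f x' y' - f x y) < e.

Definition pdx (f : R -> R -> R) (x y : R) : R := deriv1 (fun t => f t y) x.
Definition pdy (f : R -> R -> R) (x y : R) : R := deriv1 (fun t => f x t) y.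

Fixpoint Ck (n : nat) (U : R -> R -> Prop) (f : R -> R -> R) : Prop :=
  match n with
  | O => cont_on2 U f
  | S m => (forall x y, U x y ->
              (exists l, derivable_pt_lim (fun t => f t y) x l) /\
              (exists l, derivable_pt_lim (fun t => f x t) y l))
           /\ Ck m U (pdx f) /\ Ck m U (pdy f)
  end.

Definition smooth_on (U : R -> R -> Prop) (f : R -> R -> R) : Prop :=
  forall n, Ck n U f.

Definition C := (R * R)%type.
Definition Cmul (z w : C) : C :=
  (fst z * fst w - snd z * snd w, fst z * snd w + snd z * fst w).
Definition Ci : C := (0, 1).

(* complex differentiability of psi = u + i v at the point x + i y *)
Definition cdiff_at (u v : R -> R -> R) (x y : R) : Prop :=
  exists p q : R, forall e, 0 < e -> exists d, 0 < d /\
    forall h k, dist2 h k 0 0 < d ->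
      dist2 (u (x + h) (y + k) - u x y - (p * h - q * k))
            (v (x + h) (y + k) - v x y - (q * h + p * k)) 0 0
      <= e * dist2 h k 0 0.

(* integral of the 2-form F dx/\dy over the annulus {r1 <= |z| <= r2}
   (the disk when r1 = 0), computed in polar coordinates *)
Definition polar_int (F : R -> R -> R) (r1 r2 : R) : R :=
  RInt (fun r => r * RInt (fun th => F (r * cos th) (r * sin th)) 0 (2 * PI)) r1 r2.

(* omega = (i/pi) d dbar g = (1/(2 pi)) (g_xx + g_yy) dx/\dy
   (since d dbar g = (1/4) Lap g dz/\dzbar and dz/\dzbar = -2i dx/\dy). *)
Definition omega_coef (g : R -> R -> R) (x y : R) : R :=
  / (2 * PI) * (pdx (pdx g) x y + pdy (pdy g) x y).

Definition pullback_coef (F : R -> R -> R) (u v : R -> R -> R) (x y : R) : R :=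
  F (u x y) (v x y) * (pdx u x y * pdy v x y - pdy u x y * pdx v x y).

Definition semipositive (U : R -> R -> Prop) (g : R -> R -> R) : Prop :=
  forall (t : R) (u v : R -> R -> R),
    0 < t ->
    (forall x y, x ^ 2 + y ^ 2 <= t ^ 2 -> forall e, 0 < e -> exists d, 0 < d /\
       forall x' y', x' ^ 2 + y' ^ 2 <= t ^ 2 -> dist2 x' y' x y < d ->
         dist2 (u x' y') (v x' y') (u x y) (v x y) < e) ->
    (forall x y, x ^ 2 + y ^ 2 < t ^ 2 -> cdiff_at u v x y) ->
    (forall x y, x ^ 2 + y ^ 2 <= t ^ 2 -> U (u x y) (v x y)) ->
    0 <= polar_int (pullback_coef (omega_coef g) u v) 0 t.

(* eta = (i/pi) dbar g = (i/pi) * (1/2)(g_x + i g_y) * (dx - i dy);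
   its value at (x,y) on the tangent vector (vx,vy) *)
Definition eta_at (g : R -> R -> R) (x y vx vy : R) : C :=
  Cmul (Cmul (0, / PI) (/ 2 * pdx g x y, / 2 * pdy g x y)) (vx, - vy).

(* integral of eta over the positively oriented circle |z| = t,
   parametrised by th |-> (t cos th, t sin th), th in [0, 2 pi] *)
Definition eta_circ (g : R -> R -> R) (t : R) : C :=
  (RInt (fun th => fst (eta_at g (t * cos th) (t * sin th) (- t * sin th) (t * cos th))) 0 (2 * PI),
   RInt (fun th => snd (eta_at g (t * cos th) (t * sin th) (- t * sin th) (t * cos th))) 0 (2 * PI)).

Definition lim0plus (F : R -> R) (L : R) : Prop :=
  forall e, 0 < e -> exists d, 0 < d /\
    forall t, 0 < t < d -> Rabs (F t - L) < e.

Definition subpolynomial (mu : R -> R) : Prop :=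
  (forall x, 0 < x -> 0 < mu x) /\
  forall n, 0 < n -> forall e, 0 < e -> exists M,
    forall x, 0 < x -> M < x -> Rabs (mu x / Rpower x n) < e.

(* Let Phi(r) be the real part of the integral of eta over the circle |z| = r, that is
   (1/2pi) times the integral of r g_r dtheta; the imaginary part is (1/2pi) times the
   integral of g_theta over a full period, hence 0. Writing the Laplacian in polar
   coordinates and integrating the g_thetatheta term away over the circle gives
   Phi'(r) = r * (integral of omega over the circle |z| = r), so the integral of omega over
   the annulus eps <= |z| <= s is Phi(s) - Phi(eps). Testing semipositivity on translated
   small disks shows that omega >= 0 pointwise, so Phi is nondecreasing. The circle mean M(r)
   of g satisfies r M'(r) = Phi(r), and the growth hypothesis says
   |M(r) + a log r| <= log mu(1/r) = o(log(1/r)). If Phi + a stayed below -eps, or above eps,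
   on some interval (0, t], integrating would make M + a log r, resp. -(M + a log r), grow
   like eps log(1/r). Hence Phi decreases to -a as r -> 0, and the annulus integrals converge
   to Phi(s) + a >= 0. *)

From Stdlib Require Import Reals ZArith Lra Lia Classical ClassicalEpsilon FunctionalExtensionality.
From Pilot Require Import Defs.
From Coquelicot Require Import Coquelicot.
Open Scope R_scope.

Lemma deriv1_spec f x : (exists l, derivable_pt_lim f x l) -> derivable_pt_lim f x (deriv1 f x).
Proof. intros H. exact (epsilon_spec (inhabits 0) _ H). Qed.

Lemma deriv1_eq f x l : derivable_pt_lim f x l -> deriv1 f x = l.
Proof. intros H. apply (uniqueness_limite f x); [apply deriv1_spec; eauto | exact H]. Qed.

Lemma Defs_RInt_eq f a b : ex_RInt f a b -> Defs.RInt f a b = RInt f a b.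
Proof.
  intros H. unfold Defs.RInt.
  destruct (excluded_middle_informative _) as [_ | Hn].
  - assert (He : exists I, exists pr : Riemann_integrable f a b, RiemannInt pr = I)
      by (exists (RiemannInt (ex_RInt_Reals_0 _ _ _ H)); eauto).
    destruct (epsilon_spec (inhabits 0) _ He) as [pr <-].
    symmetry; apply RInt_Reals.
  - exfalso; apply Hn; constructor; exact (ex_RInt_Reals_0 _ _ _ H).
Qed.

Lemma Defs_RInt_ge_0 f a b : a <= b -> (forall x, a <= x <= b -> 0 <= f x) ->
  0 <= Defs.RInt f a b.
Proof.
  intros Hab Hf. unfold Defs.RInt.
  destruct (excluded_middle_informative _) as [[pr] | _]; [|lra].
  assert (He : exists I, exists pr : Riemann_integrable f a b, RiemannInt pr = I)
    by (exists (RiemannInt pr), pr; reflexivity).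
  destruct (epsilon_spec (inhabits 0) _ He) as [pr' <-].
  rewrite <- (RInt_Reals f a b pr').
  apply RInt_ge_0; [exact Hab | exact (ex_RInt_Reals_1 _ _ _ pr') | intros; apply Hf; lra].
Qed.

Lemma derivable_pt_lim_eq f x l l' : derivable_pt_lim f x l' -> l' = l -> derivable_pt_lim f x l.
Proof. now intros H <-. Qed.

Ltac derive_rules := repeat first
  [ eassumption | apply derivable_pt_lim_minus | apply derivable_pt_lim_plus
  | apply derivable_pt_lim_opp | apply derivable_pt_lim_mult | apply derivable_pt_lim_const
  | apply derivable_pt_lim_id | apply derivable_pt_lim_cos | apply derivable_pt_lim_sin ].

Ltac derive_by_rules := eapply derivable_pt_lim_eq; [derive_rules | cbv beta; ring].

Lemma mean_value_bound (f f' : R -> R) x u l e :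
  (forall c, Rmin x u <= c <= Rmax x u -> derivable_pt_lim f c (f' c) /\ Rabs (f' c - l) <= e) ->
  Rabs (f u - f x - l * (u - x)) <= e * Rabs (u - x).
Proof.
  intros H.
  destruct (MVT_abs (fun t => f t - l * t) (fun t => f' t - l) x u) as [c [Hc Hcxu]].
  { intros c Hc. destruct (H c Hc) as [Hd _]. derive_by_rules. }
  replace (f u - f x - l * (u - x)) with (f u - l * u - (f x - l * x)) by ring.
  rewrite Hc. apply Rmult_le_compat_r; [apply Rabs_pos | apply (H c Hcxu)].
Qed.

Lemma derivable_increment_bound f x l e : derivable_pt_lim f x l -> 0 < e ->
  exists d, 0 < d /\ forall u, Rabs (u - x) < d -> Rabs (f u - f x - l * (u - x)) <= e * Rabs (u - x).
Proof.
  intros Hf He. destruct (Hf e He) as [d Hd].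
  exists d; split; [apply cond_pos|]. intros u Hu.
  destruct (Req_dec u x) as [->|Hne].
  - rewrite !Rminus_diag, Rmult_0_r, Rminus_0_r, Rabs_R0; lra.
  - specialize (Hd (u - x) ltac:(lra) Hu). replace (x + (u - x)) with u in Hd by ring.
    replace (f u - f x - l * (u - x)) with (((f u - f x) / (u - x) - l) * (u - x)) by (field; lra).
    rewrite Rabs_mult. apply Rmult_le_compat_r; [apply Rabs_pos | lra].
Qed.

(** * Calculus in the plane *)

Lemma dist2_le_abs x y x' y' : dist2 x y x' y' <= Rabs (x - x') + Rabs (y - y').
Proof.
  unfold dist2. pose proof (Rabs_pos (x - x')); pose proof (Rabs_pos (y - y')).
  rewrite <- (sqrt_pow2 (Rabs (x - x') + Rabs (y - y'))) by lra.
  apply sqrt_le_1_alt. rewrite <- (pow2_abs (x - x')), <- (pow2_abs (y - y')). nra.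
Qed.

Lemma polar_sq_norm r t : (r * cos t) ^ 2 + (r * sin t) ^ 2 = r ^ 2.
Proof.
  pose proof (sin2_cos2 t) as E. unfold Rsqr in E.
  transitivity (r ^ 2 * (sin t * sin t + cos t * cos t)); [ring | rewrite E; ring].
Qed.

Lemma Rabs_mul_cos_le r t : Rabs (r * cos t) <= Rabs r.
Proof.
  rewrite Rabs_mult. pose proof (COS_bound t). pose proof (Rabs_pos r).
  assert (Rabs (cos t) <= 1) by (apply Rabs_le; lra). nra.
Qed.

Lemma Rabs_mul_sin_le r t : Rabs (r * sin t) <= Rabs r.
Proof.
  rewrite Rabs_mult. pose proof (SIN_bound t). pose proof (Rabs_pos r).
  assert (Rabs (sin t) <= 1) by (apply Rabs_le; lra). nra.
Qed.

Lemma smooth_on_pdx {U p} : smooth_on U p -> smooth_on U (pdx p).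
Proof. intros H n. exact (proj1 (proj2 (H (S n)))). Qed.

Lemma smooth_on_pdy {U p} : smooth_on U p -> smooth_on U (pdy p).
Proof. intros H n. exact (proj2 (proj2 (H (S n)))). Qed.

(* Mean value theorem in [x] with the continuity of [p_x], plus differentiability in [y]. *)
Lemma Ck1_differentiable U p x y : open2 U -> Ck 1 U p -> U x y ->
  differentiable_pt_lim p x y (pdx p x y) (pdy p x y).
Proof.
  intros HU [Hder [Hcx _]] Hxy eps. pose proof (cond_pos eps) as He.
  destruct (HU x y Hxy) as [d0 [Hd0 HU0]].
  destruct (Hcx x y Hxy (eps / 2)) as [d1 [Hd1 Hc1]]; [lra|].
  destruct (derivable_increment_bound (fun t => p x t) y (pdy p x y) (eps / 2))
    as [d2 [Hd2 Hy]]; [apply deriv1_spec, (Hder x y Hxy) | lra |].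
  set (d := Rmin (Rmin d0 d1) d2 / 2).
  assert (Hd : 0 < d) by (unfold d; pose proof (Rmin_pos _ _ (Rmin_pos _ _ Hd0 Hd1) Hd2); lra).
  pose proof (Rmin_l (Rmin d0 d1) d2); pose proof (Rmin_r (Rmin d0 d1) d2).
  pose proof (Rmin_l d0 d1); pose proof (Rmin_r d0 d1).
  exists (mkposreal d Hd); simpl. intros u v Hu Hv.
  assert (Hx : Rabs (p u v - p x v - pdx p x y * (u - x)) <= eps / 2 * Rabs (u - x)).
  { apply (mean_value_bound (fun t => p t v) (fun t => pdx p t v)). intros c Hc.
    assert (Hcx' : Rabs (c - x) <= Rabs (u - x))
      by (revert Hc; unfold Rmin, Rmax; destruct Rle_dec; intros; split_Rabs; lra).
    assert (Hdist : dist2 c v x y < Rmin d0 d1)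
      by (pose proof (dist2_le_abs c v x y); unfold d in *; lra).
    split.
    - apply deriv1_spec, (Hder c v), HU0; lra.
    - left; apply Hc1; lra. }
  specialize (Hy v ltac:(unfold d in *; lra)).
  replace (p u v - p x y - (pdx p x y * (u - x) + pdy p x y * (v - y))) with
    ((p u v - p x v - pdx p x y * (u - x)) + (p x v - p x y - pdy p x y * (v - y))) by ring.
  eapply Rle_trans; [apply Rabs_triang|].
  pose proof (Rmax_l (Rabs (u - x)) (Rabs (v - y))).
  pose proof (Rmax_r (Rabs (u - x)) (Rabs (v - y))). nra.
Qed.

Definition polar_dr (p : R -> R -> R) (r t : R) : R :=
  pdx p (r * cos t) (r * sin t) * cos t + pdy p (r * cos t) (r * sin t) * sin t.

Definition polar_dtheta (p : R -> R -> R) (r t : R) : R :=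
  pdx p (r * cos t) (r * sin t) * - (r * sin t) + pdy p (r * cos t) (r * sin t) * (r * cos t).

Lemma polar_derive_r U p r t : open2 U -> Ck 1 U p -> U (r * cos t) (r * sin t) ->
  derivable_pt_lim (fun u => p (u * cos t) (u * sin t)) r (polar_dr p r t).
Proof.
  intros HU Hp H.
  apply (derivable_pt_lim_comp_2d p (fun u => u * cos t) (fun u => u * sin t));
    [exact (Ck1_differentiable U p _ _ HU Hp H) | derive_by_rules | derive_by_rules].
Qed.

Lemma polar_derive_theta U p r t : open2 U -> Ck 1 U p -> U (r * cos t) (r * sin t) ->
  derivable_pt_lim (fun v => p (r * cos v) (r * sin v)) t (polar_dtheta p r t).
Proof.
  intros HU Hp H.
  apply (derivable_pt_lim_comp_2d p (fun v => r * cos v) (fun v => r * sin v));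
    [exact (Ck1_differentiable U p _ _ HU Hp H) | derive_by_rules | derive_by_rules].
Qed.

Lemma continuity_2d_pt_cos r t : continuity_2d_pt (fun _ v => cos v) r t.
Proof.
  apply (continuity_1d_2d_pt_comp cos (fun _ v => v));
    [apply continuity_cos | apply continuity_2d_pt_id2].
Qed.

Lemma continuity_2d_pt_sin r t : continuity_2d_pt (fun _ v => sin v) r t.
Proof.
  apply (continuity_1d_2d_pt_comp sin (fun _ v => v));
    [apply continuity_sin | apply continuity_2d_pt_id2].
Qed.

Ltac continuity_2d := repeat first
  [ apply continuity_2d_pt_plus | apply continuity_2d_pt_minus | apply continuity_2d_pt_mult
  | apply continuity_2d_pt_opp | apply continuity_2d_pt_const | apply continuity_2d_pt_id1
  | apply continuity_2d_pt_cos | apply continuity_2d_pt_sin ].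

Lemma locally_2d_comp (P : R -> R -> Prop) X Y r t :
  locally_2d P (X r t) (Y r t) -> continuity_2d_pt X r t -> continuity_2d_pt Y r t ->
  locally_2d (fun u v => P (X u v) (Y u v)) r t.
Proof.
  intros [d Hd] HX HY.
  apply (locally_2d_impl (fun u v => Rabs (X u v - X r t) < d /\ Rabs (Y u v - Y r t) < d)).
  - apply locally_2d_forall. intros u v [Hu Hv]. exact (Hd _ _ Hu Hv).
  - apply locally_2d_and; [apply HX | apply HY].
Qed.

Lemma continuity_2d_pt_comp f X Y r t :
  continuity_2d_pt f (X r t) (Y r t) -> continuity_2d_pt X r t -> continuity_2d_pt Y r t ->
  continuity_2d_pt (fun u v => f (X u v) (Y u v)) r t.
Proof.
  intros Hf HX HY eps.
  exact (locally_2d_comp (fun a b => Rabs (f a b - f (X r t) (Y r t)) < eps) X Y r t (Hf eps) HX HY).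
Qed.

Lemma open2_locally_2d U x y : open2 U -> U x y -> locally_2d U x y.
Proof.
  intros HU Hxy. destruct (HU x y Hxy) as [d [Hd HUd]].
  exists (mkposreal (d / 2) ltac:(lra)); simpl. intros u v Hu Hv.
  apply HUd. pose proof (dist2_le_abs u v x y). lra.
Qed.

Lemma cont_on2_continuity_2d_pt U p x y : cont_on2 U p -> U x y -> continuity_2d_pt p x y.
Proof.
  intros Hp Hxy eps. destruct (Hp x y Hxy eps (cond_pos eps)) as [d [Hd Hpd]].
  exists (mkposreal (d / 2) ltac:(lra)); simpl. intros u v Hu Hv.
  apply Hpd. pose proof (dist2_le_abs u v x y). lra.
Qed.

(** * Compactness of the circle *)

Lemma locally_2d_tube (P : R -> R -> Prop) r0 a b :
  (forall t, a <= t <= b -> locally_2d P r0 t) ->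
  exists d : posreal, forall r t, Rabs (r - r0) < d -> a <= t <= b -> P r t.
Proof.
  intros HP.
  assert (Hloc : forall t, exists d : posreal, a <= t <= b ->
            forall u v, Rabs (u - r0) < d -> Rabs (v - t) < d -> P u v).
  { intros t. destruct (classic (a <= t <= b)) as [Ht | Ht].
    - destruct (HP t Ht) as [d Hd]. exists d. auto.
    - exists (mkposreal 1 Rlt_0_1). tauto. }
  destruct (choice _ Hloc) as [delta Hdelta].
  destruct (compactness_value_1d a b delta) as [d Hd].
  exists d. intros r t Hr Ht.
  apply NNPP. intros HnP. apply (Hd t Ht). intros [u [Hu [Htu Hdu]]].
  apply HnP, (Hdelta u Hu); [lra | exact Htu].
Qed.

Lemma cos_sin_period_Z t k :
  cos (t + 2 * IZR k * PI) = cos t /\ sin (t + 2 * IZR k * PI) = sin t.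
Proof.
  destruct (Z_le_gt_dec 0 k) as [Hk | Hk].
  - rewrite <- (Z2Nat.id k Hk), <- INR_IZR_INZ. split; [apply cos_period | apply sin_period].
  - replace k with (- Z.of_nat (Z.to_nat (- k)))%Z by lia.
    rewrite opp_IZR, <- INR_IZR_INZ. set (n := Z.to_nat (- k)).
    rewrite <- (cos_period (t + 2 * - INR n * PI) n), <- (sin_period (t + 2 * - INR n * PI) n).
    replace (t + 2 * - INR n * PI + 2 * INR n * PI) with t by ring. auto.
Qed.

Lemma angle_reduce t : exists k : Z, 0 <= t + 2 * IZR k * PI <= 2 * PI.
Proof.
  pose proof PI_RGT_0. destruct (archimed (t / (2 * PI))) as [H1 H2].
  exists (1 - up (t / (2 * PI)))%Z. rewrite minus_IZR.
  assert (E : t = t / (2 * PI) * (2 * PI)) by (field; lra).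
  set (x := t / (2 * PI)) in *. rewrite E. split; nra.
Qed.

Lemma punctured_disk_annulus U s : open2 U -> 0 < s ->
  (forall x y, 0 < x ^ 2 + y ^ 2 <= s ^ 2 -> U x y) ->
  exists s1, s < s1 /\ forall r t, 0 < r < s1 -> U (r * cos t) (r * sin t).
Proof.
  intros HU Hs Hdisk.
  assert (Hin : forall r t, 0 < r <= s -> U (r * cos t) (r * sin t))
    by (intros r t Hr; apply Hdisk; rewrite polar_sq_norm; split; nra).
  destruct (locally_2d_tube (fun r t => U (r * cos t) (r * sin t)) s 0 (2 * PI)) as [d Hd].
  { intros t _. apply (locally_2d_comp U (fun u v => u * cos v) (fun u v => u * sin v));
      [apply open2_locally_2d, Hin; auto; lra | continuity_2d ..]. }
  exists (s + d). split; [pose proof (cond_pos d); lra|]. intros r t Hr.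
  destruct (Rle_lt_dec r s) as [Hrs | Hrs]; [apply Hin; lra|].
  destruct (angle_reduce t) as [k Hk]. destruct (cos_sin_period_Z t k) as [<- <-].
  apply Hd; [split_Rabs; lra | exact Hk].
Qed.

(** * Integrals over circles and annuli *)

Lemma continuity_2d_pt_snd F r t : continuity_2d_pt F r t -> continuous (F r) t.
Proof.
  intros H. apply continuity_pt_filterlim, continuity_pt_locally. intros eps.
  apply (locally_2d_1d_const_x (fun u v => Rabs (F u v - F r t) < eps)), H.
Qed.

Lemma ex_RInt_param F r a b : (forall t, continuity_2d_pt F r t) -> ex_RInt (F r) a b.
Proof.
  intros H. apply (ex_RInt_continuous (V := R_CompleteNormedModule)).
  intros t _. apply continuity_2d_pt_snd, H.
Qed.

Lemma continuous_RInt_param F a b c d r0 : a <= b -> c < r0 < d ->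
  (forall r t, c < r < d -> continuity_2d_pt F r t) ->
  continuous (fun r => RInt (F r) a b) r0.
Proof.
  intros Hab Hr0 HF.
  apply continuity_pt_filterlim, continuity_pt_locally. intros eps.
  set (c' := (c + r0) / 2). set (d' := (r0 + d) / 2).
  assert (He : 0 < eps / (b - a + 1)) by (apply Rdiv_lt_0_compat; [apply cond_pos | lra]).
  destruct (uniform_continuity_2d F c' d' a b
              (fun r t Hr _ => HF r t ltac:(unfold c', d' in *; lra)) (mkposreal _ He))
    as [delta Hdelta].
  assert (Hd : 0 < Rmin delta (Rmin (r0 - c') (d' - r0)))
    by (repeat apply Rmin_pos; [apply cond_pos | unfold c', d'; lra ..]).
  exists (mkposreal _ Hd). intros r Hr.
  change (Rabs (r - r0) < Rmin delta (Rmin (r0 - c') (d' - r0))) in Hr.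
  pose proof (Rmin_l delta (Rmin (r0 - c') (d' - r0))).
  pose proof (Rmin_r delta (Rmin (r0 - c') (d' - r0))).
  pose proof (Rmin_l (r0 - c') (d' - r0)); pose proof (Rmin_r (r0 - c') (d' - r0)).
  assert (Hrr : c' <= r <= d') by (split_Rabs; lra).
  assert (Hex : forall r, c < r < d -> ex_RInt (F r) a b)
    by (intros; apply ex_RInt_param; auto).
  change (Rabs (minus (RInt (F r) a b) (RInt (F r0) a b)) < eps).
  rewrite <- (RInt_minus (V := R_CompleteNormedModule)) by (apply Hex; unfold c', d' in *; lra).
  eapply Rle_lt_trans.
  - apply (abs_RInt_le_const _ a b (eps / (b - a + 1)) Hab).
    + apply (ex_RInt_minus (V := R_NormedModule)); apply Hex; unfold c', d' in *; lra.
    + intros t Ht. left. apply (Hdelta r0 t r t); unfold c', d' in *; try lra.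
      rewrite Rminus_diag, Rabs_R0. apply cond_pos.
  - assert (E : (b - a + 1) * (eps / (b - a + 1)) = eps) by (field; lra).
    nra.
Qed.

Lemma is_derive_RInt_param_interval (F DF : R -> R -> R) a b c d r0 : c < r0 < d ->
  (forall r t, c < r < d -> derivable_pt_lim (fun u => F u t) r (DF r t)) ->
  (forall r t, c < r < d -> continuity_2d_pt DF r t) ->
  (forall r t, c < r < d -> continuity_2d_pt F r t) ->
  is_derive (fun r => RInt (F r) a b) r0 (RInt (DF r0) a b).
Proof.
  intros Hr0 HD HcD HcF.
  assert (HDe : forall r t, c < r < d -> Derive (fun u => F u t) r = DF r t)
    by (intros; apply is_derive_unique, is_derive_Reals; auto).
  rewrite (RInt_ext (DF r0) (fun t => Derive (fun u => F u t) r0))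
    by (intros; rewrite HDe; auto).
  apply (is_derive_RInt_param F a b r0).
  - apply (locally_interval _ _ (Finite c) (Finite d)); simpl; try tauto.
    intros r Hc Hd t _. exists (DF r t). apply is_derive_Reals, HD. lra.
  - intros t _. apply (continuity_2d_pt_ext_loc DF); [|apply HcD; lra].
    assert (Hm : 0 < Rmin (r0 - c) (d - r0)) by (apply Rmin_pos; lra).
    exists (mkposreal _ Hm); simpl. intros u v Hu _.
    pose proof (Rmin_l (r0 - c) (d - r0)); pose proof (Rmin_r (r0 - c) (d - r0)).
    rewrite HDe; [reflexivity | split_Rabs; lra].
  - apply (locally_interval _ _ (Finite c) (Finite d)); simpl; try tauto.
    intros r Hc Hd. apply ex_RInt_param. intros t; apply HcF; lra.
Qed.

Lemma RInt_scal_R (f : R -> R) a b k : ex_RInt f a b ->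
  RInt (fun x => k * f x) a b = k * RInt f a b.
Proof. exact (RInt_scal (V := R_CompleteNormedModule) f a b k). Qed.

Lemma RInt_plus_R (f h : R -> R) a b : ex_RInt f a b -> ex_RInt h a b ->
  RInt (fun x => f x + h x) a b = RInt f a b + RInt h a b.
Proof. exact (RInt_plus (V := R_CompleteNormedModule) f h a b). Qed.

Lemma RInt_periodic_derive (f f' : R -> R) :
  (forall t, 0 <= t <= 2 * PI -> derivable_pt_lim f t (f' t)) ->
  (forall t, 0 <= t <= 2 * PI -> continuous f' t) -> f (2 * PI) = f 0 ->
  RInt f' 0 (2 * PI) = 0.
Proof.
  intros Hd Hc Hper. pose proof PI_RGT_0.
  apply is_RInt_unique.
  replace 0 with (minus (f (2 * PI)) (f 0)) at 2 by (rewrite Hper; change (f 0 - f 0 = 0); ring).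
  apply (is_RInt_derive (V := R_CompleteNormedModule));
    rewrite Rmin_left, Rmax_right by lra; intros t Ht; [apply is_derive_Reals, Hd | apply Hc]; exact Ht.
Qed.

Definition circle_mean (p : R -> R -> R) (r : R) : R :=
  RInt (fun t => p (r * cos t) (r * sin t)) 0 (2 * PI).

Lemma circle_mean_continuous F c d r : c < r < d ->
  (forall r t, c < r < d -> continuity_2d_pt (fun u v => F (u * cos v) (u * sin v)) r t) ->
  continuous (circle_mean F) r.
Proof.
  intros Hr HF. pose proof PI_RGT_0.
  apply (continuous_RInt_param (fun u v => F (u * cos v) (u * sin v)) 0 (2 * PI) c d);
    [lra | exact Hr | exact HF].
Qed.

Lemma circle_mean_le F r M :
  (forall t, continuity_2d_pt (fun u v => F (u * cos v) (u * sin v)) r t) ->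
  (forall t, F (r * cos t) (r * sin t) <= M) -> circle_mean F r <= 2 * PI * M.
Proof.
  intros HF HM. pose proof PI_RGT_0.
  apply Rle_trans with (RInt (fun _ => M) 0 (2 * PI)).
  - apply RInt_le; [lra | apply (ex_RInt_param (fun u v => F (u * cos v) (u * sin v))), HF |
                    apply ex_RInt_const | intros; apply HM].
  - rewrite RInt_const. change (scal (2 * PI - 0) M) with ((2 * PI - 0) * M). lra.
Qed.

Lemma polar_int_RInt F c d r1 r2 : c < r1 -> r1 <= r2 -> r2 < d ->
  (forall r t, c < r < d -> continuity_2d_pt (fun u v => F (u * cos v) (u * sin v)) r t) ->
  polar_int F r1 r2 = RInt (fun r => r * circle_mean F r) r1 r2.
Proof.
  intros Hc Hr Hd HF.
  assert (Hin : forall r, Rmin r1 r2 < r < Rmax r1 r2 ->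
     r * Defs.RInt (fun t => F (r * cos t) (r * sin t)) 0 (2 * PI) = r * circle_mean F r).
  { intros r Hr'. rewrite Rmin_left, Rmax_right in Hr' by lra.
    rewrite Defs_RInt_eq; [reflexivity|].
    apply (ex_RInt_param (fun u v => F (u * cos v) (u * sin v))). intros t; apply HF; lra. }
  assert (Hex : ex_RInt (fun r => r * circle_mean F r) r1 r2).
  { apply (ex_RInt_continuous (V := R_CompleteNormedModule)).
    rewrite Rmin_left, Rmax_right by lra. intros r Hr'.
    apply (continuous_mult (fun r => r) (circle_mean F));
      [apply continuous_id | apply (circle_mean_continuous F c d); [lra | exact HF]]. }
  unfold polar_int. rewrite Defs_RInt_eq.
  - exact (RInt_ext _ _ _ _ Hin).
  - exact (ex_RInt_ext _ _ _ _ (fun r Hr' => eq_sym (Hin r Hr')) Hex).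
Qed.

Lemma polar_int_ge_0 F r1 r2 : 0 <= r1 <= r2 ->
  (forall r t, r1 <= r <= r2 -> 0 <= F (r * cos t) (r * sin t)) -> 0 <= polar_int F r1 r2.
Proof.
  intros Hr HF. pose proof PI_RGT_0.
  apply Defs_RInt_ge_0; [lra|]. intros r Hr'.
  apply Rmult_le_pos; [lra|]. apply Defs_RInt_ge_0; [lra|]. intros; apply HF, Hr'.
Qed.

Lemma polar_int_lt_0 F c d t : c < 0 -> 0 < t < d ->
  (forall r v, c < r < d -> continuity_2d_pt (fun u v => F (u * cos v) (u * sin v)) r v) ->
  (forall r, 0 < r < t -> circle_mean F r < 0) -> polar_int F 0 t < 0.
Proof.
  intros Hc Ht HF Hneg.
  rewrite (polar_int_RInt F c d 0 t) by (lra || exact HF).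
  apply Rlt_le_trans with (RInt (fun _ => 0) 0 t).
  - apply RInt_lt; [lra | intros; apply continuous_const | intros r Hr | intros r Hr].
    + apply (continuous_mult (fun r => r) (circle_mean F));
        [apply continuous_id | apply (circle_mean_continuous F c d); [lra | exact HF]].
    + pose proof (Hneg r Hr). nra.
  - rewrite RInt_const. change (scal (t - 0) 0) with ((t - 0) * 0). lra.
Qed.

(** * Semipositivity *)

Lemma nonneg_of_disk_integrals_nonneg (F : R -> R -> R) x0 y0 :
  locally_2d (continuity_2d_pt F) x0 y0 ->
  (forall e, 0 < e -> exists t, 0 < t < e /\
     0 <= polar_int (fun x y => F (x0 + x) (y0 + y)) 0 t) ->
  0 <= F x0 y0.
Proof.
  intros [d Hcont] Hint. apply Rnot_lt_le. intros Hneg.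
  assert (Hc0 : continuity_2d_pt F x0 y0)
    by (apply Hcont; rewrite Rminus_diag, Rabs_R0; apply cond_pos).
  destruct (Hc0 (mkposreal (- F x0 y0 / 2) ltac:(lra))) as [d' Hd']. simpl in Hd'.
  set (rho := Rmin d d').
  assert (Hrho : 0 < rho) by (apply Rmin_pos; apply cond_pos).
  assert (Hrho_d : rho <= d) by apply Rmin_l.
  assert (Hrho_d' : rho <= d') by apply Rmin_r.
  assert (Hnear : forall r t, - rho < r < rho ->
            Rabs (x0 + r * cos t - x0) < rho /\ Rabs (y0 + r * sin t - y0) < rho).
  { intros r t Hr. replace (x0 + r * cos t - x0) with (r * cos t) by ring.
    replace (y0 + r * sin t - y0) with (r * sin t) by ring.
    pose proof (Rabs_mul_cos_le r t); pose proof (Rabs_mul_sin_le r t).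
    assert (Rabs r < rho) by (apply Rabs_def1; lra). lra. }
  set (F0 := fun x y => F (x0 + x) (y0 + y)).
  assert (HG : forall r t, - rho < r < rho ->
            continuity_2d_pt (fun u v => F0 (u * cos v) (u * sin v)) r t).
  { intros r t Hr. destruct (Hnear r t Hr).
    apply (continuity_2d_pt_comp F (fun u v => x0 + u * cos v) (fun u v => y0 + u * sin v));
      [apply Hcont; lra | continuity_2d ..]. }
  destruct (Hint rho Hrho) as [t [Ht Hpol]]. change (0 <= polar_int F0 0 t) in Hpol.
  enough (polar_int F0 0 t < 0) by lra.
  apply (polar_int_lt_0 F0 (- rho) rho t); [lra | lra | exact HG | intros r Hr].
  apply Rle_lt_trans with (2 * PI * (F x0 y0 / 2)); [| pose proof PI_RGT_0; nra].
  apply circle_mean_le; [intros; apply HG; lra | intros v].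
  destruct (Hnear r v ltac:(lra)).
  assert (Hlt := Hd' (x0 + r * cos v) (y0 + r * sin v) ltac:(lra) ltac:(lra)).
  apply Rabs_def2 in Hlt. unfold F0. lra.
Qed.

Lemma pullback_coef_translation F x0 y0 :
  pullback_coef F (fun x _ => x0 + x) (fun _ y => y0 + y) = fun x y => F (x0 + x) (y0 + y).
Proof.
  apply functional_extensionality; intros x; apply functional_extensionality; intros y.
  unfold pullback_coef, pdx, pdy; cbv beta.
  rewrite (deriv1_eq (fun t => x0 + t) x 1), (deriv1_eq (fun _ => x0 + x) y 0),
    (deriv1_eq (fun _ => y0 + y) x 0), (deriv1_eq (fun t => y0 + t) y 1) by derive_by_rules.
  ring.
Qed.

Lemma translation_cdiff_at x0 y0 x y : cdiff_at (fun x _ => x0 + x) (fun _ y => y0 + y) x y.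
Proof.
  exists 1, 0. intros e He. exists 1. split; [lra|]. intros h k _. cbv beta.
  replace (x0 + (x + h) - (x0 + x) - (1 * h - 0 * k)) with 0 by ring.
  replace (y0 + (y + k) - (y0 + y) - (0 * h + 1 * k)) with 0 by ring.
  unfold dist2 at 1. replace ((0 - 0) ^ 2 + (0 - 0) ^ 2) with 0 by ring. rewrite sqrt_0.
  apply Rmult_le_pos; [lra | apply sqrt_pos].
Qed.

Lemma omega_coef_continuity U g x y : smooth_on U g -> U x y ->
  continuity_2d_pt (omega_coef g) x y.
Proof.
  intros Hg Hxy. unfold omega_coef.
  apply continuity_2d_pt_mult; [apply continuity_2d_pt_const | apply continuity_2d_pt_plus];
    apply (cont_on2_continuity_2d_pt U); try exact Hxy.
  - exact (smooth_on_pdx (smooth_on_pdx Hg) 0%nat).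
  - exact (smooth_on_pdy (smooth_on_pdy Hg) 0%nat).
Qed.

(* Semipositivity is only tested on the translations [z |-> z0 + z] of small disks. *)
Lemma semipositive_omega_nonneg U g x0 y0 : open2 U -> smooth_on U g -> semipositive U g ->
  U x0 y0 -> 0 <= omega_coef g x0 y0.
Proof.
  intros HU Hg Hsp H0. destruct (HU x0 y0 H0) as [d [Hd HUd]].
  apply nonneg_of_disk_integrals_nonneg.
  - apply (locally_2d_impl U); [apply locally_2d_forall | apply open2_locally_2d; auto].
    intros x y Hxy. exact (omega_coef_continuity U g x y Hg Hxy).
  - intros e He. set (t := Rmin e d / 2).
    assert (Ht : 0 < t < e /\ t < d)
      by (unfold t; pose proof (Rmin_l e d); pose proof (Rmin_r e d); pose proof (Rmin_pos e d); lra).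
    exists t. split; [lra|]. rewrite <- pullback_coef_translation. apply Hsp; [lra | | |].
    + intros x y _ eps Heps. exists eps. split; [exact Heps|]. intros x' y' _.
      unfold dist2; cbv beta.
      replace (x0 + x' - (x0 + x)) with (x' - x) by ring.
      replace (y0 + y' - (y0 + y)) with (y' - y) by ring. auto.
    + intros x y _. apply translation_cdiff_at.
    + intros x y Hxy. apply HUd. unfold dist2.
      replace (x0 + x - x0) with x by ring. replace (y0 + y - y0) with y by ring.
      apply Rle_lt_trans with t; [|lra].
      rewrite <- (sqrt_pow2 t) by lra. apply sqrt_le_1_alt, Hxy.
Qed.

(** * The flux through circles *)

(* [tangential g r t] is [1/r] times the angular derivative of [g] on the circle of radius [r]. *)
Definition tangential (g : R -> R -> R) (r t : R) : R :=
  pdy g (r * cos t) (r * sin t) * cos t - pdx g (r * cos t) (r * sin t) * sin t.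

Definition tangential_dtheta (g : R -> R -> R) (r t : R) : R :=
  polar_dtheta (pdy g) r t * cos t - pdy g (r * cos t) (r * sin t) * sin t
  - (polar_dtheta (pdx g) r t * sin t + pdx g (r * cos t) (r * sin t) * cos t).

(* The real part of the integral of [eta] over the circle of radius [r]. *)
Definition flux (g : R -> R -> R) (r : R) : R :=
  RInt (fun t => / (2 * PI) * (r * polar_dr g r t)) 0 (2 * PI).

Definition flux_dr (g : R -> R -> R) (r t : R) : R :=
  / (2 * PI) * (polar_dr g r t + r * (polar_dr (pdx g) r t * cos t + polar_dr (pdy g) r t * sin t)).

(* The Laplacian in polar coordinates, [r (g_xx + g_yy) = r g_rr + g_r + g_thth / r]. *)
Lemma flux_dr_laplacian g r t :
  flux_dr g r t = r * omega_coef g (r * cos t) (r * sin t) - / (2 * PI) * tangential_dtheta g r t.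
Proof.
  unfold flux_dr, tangential_dtheta, omega_coef, polar_dr, polar_dtheta.
  pose proof (sin2_cos2 t) as E. unfold Rsqr in E.
  match goal with |- _ = ?rhs =>
    transitivity (rhs - / (2 * PI) * r
                        * (pdx (pdx g) (r * cos t) (r * sin t) + pdy (pdy g) (r * cos t) (r * sin t))
                        * (1 - (sin t * sin t + cos t * cos t))) end;
    [ring | rewrite E; ring].
Qed.

Section CircleMeans.

Variables (U : R -> R -> Prop) (g : R -> R -> R) (s1 : R).
Hypotheses (HU : open2 U) (Hg : smooth_on U g)
  (Hann : forall r t, 0 < r < s1 -> U (r * cos t) (r * sin t)).

Lemma polar_comp_continuity p r t : smooth_on U p -> 0 < r < s1 ->
  continuity_2d_pt (fun u v => p (u * cos v) (u * sin v)) r t.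
Proof.
  intros Hp Hr.
  apply (continuity_2d_pt_comp p (fun u v => u * cos v) (fun u v => u * sin v));
    [apply (cont_on2_continuity_2d_pt U); [exact (Hp 0%nat) | apply Hann, Hr] | continuity_2d ..].
Qed.

Ltac polar_continuity :=
  continuity_2d;
  try (apply polar_comp_continuity;
       [repeat first [apply smooth_on_pdx | apply smooth_on_pdy]; assumption | lra]).

Lemma circle_mean_derive r : 0 < r < s1 ->
  is_derive (circle_mean g) r (RInt (polar_dr g r) 0 (2 * PI)).
Proof.
  intros Hr.
  apply (is_derive_RInt_param_interval (fun u t => g (u * cos t) (u * sin t)) (polar_dr g) _ _ 0 s1);
    [exact Hr | intros u t Hu .. ].
  - exact (polar_derive_r U g u t HU (Hg 1%nat) (Hann u t Hu)).
  - unfold polar_dr. polar_continuity.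
  - polar_continuity.
Qed.

Lemma flux_derive_RInt r : 0 < r < s1 -> is_derive (flux g) r (RInt (flux_dr g r) 0 (2 * PI)).
Proof.
  intros Hr.
  apply (is_derive_RInt_param_interval (fun u t => / (2 * PI) * (u * polar_dr g u t))
           (flux_dr g) _ _ 0 s1); [exact Hr | intros u t Hu .. ].
  - pose proof (polar_derive_r U (pdx g) u t HU (smooth_on_pdx Hg 1%nat) (Hann u t Hu)) as Hx.
    pose proof (polar_derive_r U (pdy g) u t HU (smooth_on_pdy Hg 1%nat) (Hann u t Hu)) as Hy.
    unfold flux_dr, polar_dr in *. derive_by_rules.
  - unfold flux_dr, polar_dr. polar_continuity.
  - unfold polar_dr. polar_continuity.
Qed.

Lemma tangential_dtheta_RInt r : 0 < r < s1 -> RInt (tangential_dtheta g r) 0 (2 * PI) = 0.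
Proof.
  intros Hr. apply (RInt_periodic_derive (tangential g r)).
  - intros t _.
    pose proof (polar_derive_theta U (pdx g) r t HU (smooth_on_pdx Hg 1%nat) (Hann r t Hr)) as Hx.
    pose proof (polar_derive_theta U (pdy g) r t HU (smooth_on_pdy Hg 1%nat) (Hann r t Hr)) as Hy.
    unfold tangential, tangential_dtheta. derive_by_rules.
  - intros t _. apply (continuity_2d_pt_snd (tangential_dtheta g)).
    unfold tangential_dtheta, polar_dtheta. polar_continuity.
  - unfold tangential. rewrite cos_2PI, sin_2PI, cos_0, sin_0. reflexivity.
Qed.

Lemma flux_derive r : 0 < r < s1 -> is_derive (flux g) r (r * circle_mean (omega_coef g) r).
Proof.
  intros Hr.
  assert (Hom : ex_RInt (fun t => omega_coef g (r * cos t) (r * sin t)) 0 (2 * PI)).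
  { apply (ex_RInt_param (fun u t => omega_coef g (u * cos t) (u * sin t))). intros t.
    unfold omega_coef. polar_continuity. }
  assert (Htd : ex_RInt (tangential_dtheta g r) 0 (2 * PI)).
  { apply ex_RInt_param. intros t. unfold tangential_dtheta, polar_dtheta. polar_continuity. }
  replace (r * circle_mean (omega_coef g) r) with (RInt (flux_dr g r) 0 (2 * PI));
    [exact (flux_derive_RInt r Hr)|].
  (* [simpl] exposes [R] as the carrier of [R_CompleteNormedModule], so that [ring] applies. *)
  rewrite (RInt_ext (flux_dr g r) (fun t => r * omega_coef g (r * cos t) (r * sin t)
                                            + - / (2 * PI) * tangential_dtheta g r t))
    by (intros t _; rewrite flux_dr_laplacian; simpl; ring).
  rewrite RInt_plus_R, !RInt_scal_R, (tangential_dtheta_RInt r Hr);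
    try (assumption || apply (ex_RInt_scal (V := R_NormedModule)); assumption).
  unfold circle_mean. simpl. ring.
Qed.

Lemma polar_int_omega e t : 0 < e <= t -> t < s1 ->
  polar_int (omega_coef g) e t = flux g t - flux g e.
Proof.
  intros He Ht.
  assert (Hcont : forall r v, 0 < r < s1 ->
            continuity_2d_pt (fun u v => omega_coef g (u * cos v) (u * sin v)) r v)
    by (intros; unfold omega_coef; polar_continuity).
  rewrite (polar_int_RInt _ 0 s1 e t) by (lra || exact Hcont).
  apply is_RInt_unique. change (flux g t - flux g e) with (minus (flux g t) (flux g e)).
  apply (is_RInt_derive (V := R_CompleteNormedModule));
    rewrite Rmin_left, Rmax_right by lra; intros r Hr.
  - apply flux_derive; lra.
  - apply (continuous_mult (fun r => r) (circle_mean (omega_coef g)));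
      [apply continuous_id | apply (circle_mean_continuous _ 0 s1); [lra | exact Hcont]].
Qed.

Lemma flux_nondecreasing e t : (forall x y, U x y -> 0 <= omega_coef g x y) ->
  0 < e <= t -> t < s1 -> flux g e <= flux g t.
Proof.
  intros Hpos He Ht.
  assert (Hint := polar_int_ge_0 (omega_coef g) e t ltac:(lra)
                    (fun r v Hr => Hpos _ _ (Hann r v ltac:(lra)))).
  rewrite polar_int_omega in Hint by lra. lra.
Qed.

Lemma eta_circ_fst r : 0 < r < s1 -> fst (eta_circ g r) = flux g r.
Proof.
  intros Hr. unfold eta_circ, flux; cbn [fst].
  replace (fun t => fst (eta_at g (r * cos t) (r * sin t) (- r * sin t) (r * cos t)))
    with (fun t => / (2 * PI) * (r * polar_dr g r t))
    by (apply functional_extensionality; intros t;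
        unfold eta_at, Cmul, polar_dr; simpl; field; apply PI_neq0).
  apply Defs_RInt_eq, (ex_RInt_param (fun u v => / (2 * PI) * (u * polar_dr g u v))).
  intros t. unfold polar_dr. polar_continuity.
Qed.

Lemma eta_circ_snd r : 0 < r < s1 -> snd (eta_circ g r) = 0.
Proof.
  intros Hr. unfold eta_circ; cbn [snd].
  replace (fun t => snd (eta_at g (r * cos t) (r * sin t) (- r * sin t) (r * cos t)))
    with (fun t => / (2 * PI) * polar_dtheta g r t)
    by (apply functional_extensionality; intros t;
        unfold eta_at, Cmul, polar_dtheta; simpl; field; apply PI_neq0).
  rewrite Defs_RInt_eq.
  - apply (RInt_periodic_derive (fun t => / (2 * PI) * g (r * cos t) (r * sin t))).
    + intros t _. pose proof (polar_derive_theta U g r t HU (Hg 1%nat) (Hann r t Hr)).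
      derive_by_rules.
    + intros t _. apply (continuity_2d_pt_snd (fun u v => / (2 * PI) * polar_dtheta g u v)).
      unfold polar_dtheta. polar_continuity.
    + rewrite cos_2PI, sin_2PI, cos_0, sin_0. reflexivity.
  - apply (ex_RInt_param (fun u v => / (2 * PI) * polar_dtheta g u v)). intros t.
    unfold polar_dtheta. polar_continuity.
Qed.

Lemma log_mean_derive a r : 0 < r < s1 ->
  derivable_pt_lim (fun r => circle_mean g r / (2 * PI) + a * ln r) r ((flux g r + a) / r).
Proof.
  intros Hr. pose proof PI_RGT_0.
  pose proof (proj1 (is_derive_Reals _ _ _) (circle_mean_derive r Hr)) as Hm.
  pose proof (derivable_pt_lim_ln r ltac:(lra)) as Hln.
  assert (Hflux : flux g r = / (2 * PI) * r * RInt (polar_dr g r) 0 (2 * PI)).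
  { unfold flux. rewrite <- RInt_scal_R.
    - apply RInt_ext. intros t _. simpl. ring.
    - apply (ex_RInt_param (polar_dr g)). intros t. unfold polar_dr. polar_continuity. }
  unfold Rdiv. eapply derivable_pt_lim_eq; [derive_rules | rewrite Hflux; field; lra].
Qed.

Lemma log_mean_bound a mu s r : s < s1 -> 0 < r <= s ->
  (forall x y, 0 < x ^ 2 + y ^ 2 <= s ^ 2 ->
     - ln (mu (/ sqrt (x ^ 2 + y ^ 2))) <= g x y + a * ln (sqrt (x ^ 2 + y ^ 2))
     /\ g x y + a * ln (sqrt (x ^ 2 + y ^ 2)) <= ln (mu (/ sqrt (x ^ 2 + y ^ 2)))) ->
  Rabs (circle_mean g r / (2 * PI) + a * ln r) <= ln (mu (/ r)).
Proof.
  intros Hs Hr Hb. pose proof PI_RGT_0.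
  assert (Hpt : forall t, 0 <= t <= 2 * PI ->
            Rabs (g (r * cos t) (r * sin t) + a * ln r) <= ln (mu (/ r))).
  { intros t _. pose proof (Hb (r * cos t) (r * sin t)) as Ht.
    rewrite polar_sq_norm, sqrt_pow2 in Ht by lra.
    destruct Ht as [H1 H2]; [split; nra|]. apply Rabs_le. lra. }
  assert (Hex : ex_RInt (fun t => g (r * cos t) (r * sin t)) 0 (2 * PI))
    by (apply (ex_RInt_param (fun u v => g (u * cos v) (u * sin v))); intros; polar_continuity).
  assert (Hint : circle_mean g r + 2 * PI * (a * ln r)
                 = RInt (fun t => g (r * cos t) (r * sin t) + a * ln r) 0 (2 * PI)).
  { rewrite RInt_plus_R, RInt_const; [|exact Hex | apply ex_RInt_const].
    change (scal (2 * PI - 0) (a * ln r)) with ((2 * PI - 0) * (a * ln r)).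
    unfold circle_mean. ring. }
  pose proof (abs_RInt_le_const (fun t => g (r * cos t) (r * sin t) + a * ln r) 0 (2 * PI) _ ltac:(lra)
                (ex_RInt_plus _ _ _ _ Hex (ex_RInt_const _ _ _)) Hpt) as Habs.
  rewrite <- Hint in Habs.
  replace (circle_mean g r / (2 * PI) + a * ln r)
    with (/ (2 * PI) * (circle_mean g r + 2 * PI * (a * ln r))) by (field; lra).
  rewrite Rabs_mult, Rabs_inv, Rabs_pos_eq by lra.
  apply (Rmult_le_reg_l (2 * PI)); [lra|].
  rewrite <- Rmult_assoc, Rinv_r, Rmult_1_l by lra. lra.
Qed.

End CircleMeans.

(** * Logarithmic growth *)

Lemma subpolynomial_ln_lt mu eps : subpolynomial mu -> 0 < eps ->
  exists X, 0 < X /\ forall x, X < x -> ln (mu x) < eps * ln x.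
Proof.
  intros [Hpos Hgrowth] He.
  destruct (Hgrowth eps He 1 Rlt_0_1) as [M HM].
  exists (Rmax M 1). pose proof (Rmax_l M 1); pose proof (Rmax_r M 1).
  split; [lra|]. intros x Hx.
  specialize (HM x ltac:(lra) ltac:(lra)).
  assert (Hp : 0 < Rpower x eps) by (unfold Rpower; apply exp_pos).
  rewrite Rabs_pos_eq in HM by (apply Rlt_le, Rdiv_lt_0_compat; [apply Hpos; lra | exact Hp]).
  rewrite <- ln_Rpower. apply ln_increasing; [apply Hpos; lra|].
  apply (Rmult_lt_compat_r (Rpower x eps)) in HM; [|exact Hp].
  unfold Rdiv in HM. rewrite Rmult_assoc, Rinv_l, Rmult_1_r, Rmult_1_l in HM by lra. exact HM.
Qed.

Lemma subpolynomial_not_log_dominated mu eps C t1 : subpolynomial mu -> 0 < eps -> 0 < t1 ->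
  ~ (forall r, 0 < r <= t1 -> eps * - ln r <= ln (mu (/ r)) + C).
Proof.
  intros Hmu He Ht1 H.
  destruct (subpolynomial_ln_lt mu (eps / 2) Hmu ltac:(lra)) as [X [HX0 HX]].
  set (x := Rmax (Rmax (X + 1) (/ t1)) (exp (2 * Rabs C / eps + 1))).
  assert (Hx1 : X + 1 <= x) by (unfold x; eapply Rle_trans; [apply Rmax_l | apply Rmax_l]).
  assert (Hx2 : / t1 <= x) by (unfold x; eapply Rle_trans; [apply Rmax_r | apply Rmax_l]).
  assert (Hx3 : exp (2 * Rabs C / eps + 1) <= x) by (unfold x; apply Rmax_r).
  assert (Hlnx : 2 * Rabs C / eps + 1 <= ln x)
    by (rewrite <- (ln_exp (2 * Rabs C / eps + 1)); apply ln_le; [apply exp_pos | exact Hx3]).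
  assert (Hr : 0 < / x <= t1).
  { split; [apply Rinv_0_lt_compat; lra|].
    rewrite <- (Rinv_inv t1). apply Rinv_le_contravar; [apply Rinv_0_lt_compat; lra | exact Hx2]. }
  pose proof (H (/ x) Hr) as Hx. rewrite Rinv_inv, ln_Rinv in Hx by lra.
  pose proof (HX x ltac:(lra)). pose proof (Rle_abs C).
  assert (E : eps / 2 * (2 * Rabs C / eps + 1) = Rabs C + eps / 2) by (field; lra).
  nra.
Qed.

Lemma nonincreasing_of_derive_nonpos (f f' : R -> R) a b : a <= b ->
  (forall c, a <= c <= b -> derivable_pt_lim f c (f' c)) ->
  (forall c, a < c < b -> f' c <= 0) -> f b <= f a.
Proof.
  intros Hab Hd Hn. destruct (Req_dec a b) as [<- | Hne]; [lra|].
  destruct (MVT_cor2 f f' a b ltac:(lra) Hd) as [c [Hc Hcab]].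
  pose proof (Hn c Hcab). nra.
Qed.

(* A slope [h' <= -eps/r] near [0] makes [h] grow like [eps ln (1/r)]. *)
Lemma subpolynomial_bound_log_slope mu h dh eps t : subpolynomial mu -> 0 < eps -> 0 < t ->
  (forall r, 0 < r <= t -> derivable_pt_lim h r (dh r)) ->
  (forall r, 0 < r <= t -> dh r <= - eps / r) ->
  ~ (forall r, 0 < r <= t -> h r <= ln (mu (/ r))).
Proof.
  intros Hmu He Ht Hd Hslope Hb.
  apply (subpolynomial_not_log_dominated mu eps (- h t - eps * ln t) t Hmu He Ht).
  intros r Hr.
  assert (Hmono : h t + eps * ln t <= h r + eps * ln r).
  { apply (nonincreasing_of_derive_nonpos (fun r => h r + eps * ln r) (fun r => dh r + eps / r));
      [lra | intros c Hc | intros c Hc].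
    - pose proof (Hd c ltac:(lra)). pose proof (derivable_pt_lim_ln c ltac:(lra)).
      unfold Rdiv. derive_by_rules.
    - pose proof (Hslope c ltac:(lra)). unfold Rdiv in *. lra. }
  pose proof (Hb r Hr). lra.
Qed.

Lemma log_slope_limit mu h psi s : subpolynomial mu -> 0 < s ->
  (forall r, 0 < r <= s -> derivable_pt_lim h r (psi r / r)) ->
  (forall r t, 0 < r <= t -> t <= s -> psi r <= psi t) ->
  (forall r, 0 < r <= s -> Rabs (h r) <= ln (mu (/ r))) ->
  (forall t, 0 < t <= s -> 0 <= psi t) /\ lim0plus psi 0.
Proof.
  intros Hmu Hs Hd Hmono Hb.
  assert (Hge : forall t, 0 < t <= s -> 0 <= psi t).
  { intros t Ht. apply Rnot_lt_le. intros Hneg.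
    apply (subpolynomial_bound_log_slope mu h (fun r => psi r / r) (- psi t) t Hmu);
      [lra | lra | intros r Hr; apply Hd; lra | intros r Hr | intros r Hr].
    - unfold Rdiv. rewrite Ropp_involutive.
      apply Rmult_le_compat_r; [left; apply Rinv_0_lt_compat; lra | apply Hmono; lra].
    - pose proof (Hb r ltac:(lra)) as Hr'. apply Rabs_le_between in Hr'. lra. }
  split; [exact Hge|]. intros eps He.
  destruct (classic (exists t0, 0 < t0 <= s /\ psi t0 < eps)) as [[t0 [Ht0 Hlt]] | Hn].
  - exists t0. split; [lra|]. intros t Ht.
    rewrite Rminus_0_r, Rabs_pos_eq by (apply Hge; lra).
    pose proof (Hmono t t0 ltac:(lra) ltac:(lra)). lra.
  - exfalso.
    apply (subpolynomial_bound_log_slope mu (fun r => - h r) (fun r => - (psi r / r)) eps s Hmu He Hs);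
      intros r Hr.
    + apply derivable_pt_lim_opp, Hd, Hr.
    + assert (eps <= psi r)
        by (apply Rnot_lt_le; intros Hl; apply Hn; exists r; split; [exact Hr | exact Hl]).
      assert (0 < / r) by (apply Rinv_0_lt_compat; lra).
      unfold Rdiv. nra.
    + pose proof (Hb r Hr) as Hr'. apply Rabs_le_between in Hr'. lra.
Qed.

Lemma lim0plus_le (F G : R -> R) L L' d : 0 < d ->
  (forall t, 0 < t < d -> Rabs (F t - L) <= Rabs (G t - L')) -> lim0plus G L' -> lim0plus F L.
Proof.
  intros Hd HFG HG eps He. destruct (HG eps He) as [d' [Hd' HG']].
  exists (Rmin d d'). split; [apply Rmin_pos; lra|]. intros t Ht.
  pose proof (Rmin_l d d'); pose proof (Rmin_r d d').
  eapply Rle_lt_trans; [apply HFG | apply HG']; lra.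
Qed.


Theorem mainTheorem3 (s : R) (U : R -> R -> Prop) (g : R -> R -> R)
  (a : R) (mu : R -> R) :
  0 < s <= 1 ->
  open2 U ->
  (forall x y, 0 < x ^ 2 + y ^ 2 <= s ^ 2 -> U x y) ->
  smooth_on U g ->
  semipositive U g ->
  subpolynomial mu ->
  (forall x y, 0 < x ^ 2 + y ^ 2 <= s ^ 2 ->
     - ln (mu (/ sqrt (x ^ 2 + y ^ 2))) <= g x y + a * ln (sqrt (x ^ 2 + y ^ 2))
     /\ g x y + a * ln (sqrt (x ^ 2 + y ^ 2)) <= ln (mu (/ sqrt (x ^ 2 + y ^ 2)))) ->
  exists L : R,
    lim0plus (fun eps => polar_int (omega_coef g) eps s) L /\
    lim0plus (fun t => fst (eta_circ g t)) (- a) /\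
    lim0plus (fun t => snd (eta_circ g t)) 0 /\
    0 <= L /\
    L = fst (eta_circ g s) + a /\
    snd (eta_circ g s) = 0.
Proof.
  intros Hs HU Hdisk Hg Hsp Hmu Hbound.
  destruct (punctured_disk_annulus U s HU ltac:(lra) Hdisk) as [s1 [Hss1 Hann]].
  pose proof (fun x y => semipositive_omega_nonneg U g x y HU Hg Hsp) as Hom.
  destruct (log_slope_limit mu (fun r => circle_mean g r / (2 * PI) + a * ln r)
              (fun r => flux g r + a) s Hmu ltac:(lra)) as [Hpos Hlim].
  - intros r Hr. apply (log_mean_derive U g s1 HU Hg Hann). lra.
  - intros r t Hr Ht. apply Rplus_le_compat_r, (flux_nondecreasing U g s1 HU Hg Hann); auto; lra.
  - intros r Hr. apply (log_mean_bound U g s1 Hg Hann a mu s r); auto; lra.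
  - exists (flux g s + a).
    rewrite (eta_circ_fst U g s1 Hg Hann s), (eta_circ_snd U g s1 HU Hg Hann s) by lra.
    repeat split; try (refine (lim0plus_le _ _ _ _ s ltac:(lra) _ Hlim); intros t Ht).
    + rewrite (polar_int_omega U g s1 HU Hg Hann t s) by lra.
      replace (flux g s - flux g t - (flux g s + a)) with (- (flux g t + a - 0)) by ring.
      rewrite Rabs_Ropp. lra.
    + rewrite (eta_circ_fst U g s1 Hg Hann t) by lra.
      replace (flux g t - - a) with (flux g t + a - 0) by ring. lra.
    + rewrite (eta_circ_snd U g s1 HU Hg Hann t), Rminus_0_r, Rabs_R0 by lra. apply Rabs_pos.
    + apply Hpos. lra.
Qed.
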